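(* Let $(Y,\cdot)$ be a strong order-preserving partial action of a monoid $T$ on a semilattice $Y$. Then there is a globalisation $(\kappa,\mathcal{X},\bullet)$ of $(Y,\cdot)$ such that $\mathcal{X}$ is a semilattice with identity, $\kappa:Y\to\mathcal{X}$ is an (injective) semilattice morphism, and $(\mathcal{X},\bullet)$ is an order-preserving action of $T$.
   Context: A semilattice is a commutative semigroup of idempotents, viewed as a poset via $e\le f$ iff $ef=e$. A partial action of a monoid $T$ on a set $X$ is a partial map $T\times X\to X$, $(t,x)\mapsto t\cdot x$, such that $1\cdot x$ is defined and equals $x$, and whenever $t\cdot x$ and $s\cdot(t\cdot x)$ are defined, $st\cdot x$ is defined and equals $s\cdot(t\cdot x)$. It is an action if always defined; strong if whenever $t\cdot x$ and $st\cdot x$ are defined then $s\cdot(t\cdot x)$ is defined; order-preserving (on a poset) if whenever $x\le y$ and $t\cdot y$ is defined then $t\cdot x$ is defined and $t\cdot x\le t\cdot y$. A globalisation of $(X,\cdot)$ is a triple $(\iota,\mathbf{X},\ast)$ with $\iota:X\to\mathbf{X}$ injective and $(\mathbf{X},\ast)$ an action of $T$ such that $t\cdot x$ is defined iff $t\ast x\iota\in X\iota$, and then $(t\cdot x)\iota=t\ast x\iota$. *)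

Definition is_monoid {T : Type} (mul : T -> T -> T) (one : T) : Prop :=
  (forall a b c, mul a (mul b c) = mul (mul a b) c) /\
  (forall a, mul one a = a) /\ (forall a, mul a one = a).

Definition is_semilattice {Y : Type} (m : Y -> Y -> Y) : Prop :=
  (forall a b c, m a (m b c) = m (m a b) c) /\
  (forall a b, m a b = m b a) /\ (forall a, m a a = a).

Definition sl_le {Y : Type} (m : Y -> Y -> Y) (e f : Y) : Prop := m e f = e.

Definition is_semilattice_with_identity {X : Type} (m : X -> X -> X) (u : X) : Prop :=
  is_semilattice m /\ (forall a, m u a = a) /\ (forall a, m a u = a).

Definition is_semilattice_morphism {Y X : Type} (mY : Y -> Y -> Y) (mX : X -> X -> X)
  (k : Y -> X) : Prop := forall a b, k (mY a b) = mX (k a) (k b).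

(* Partial action of T on Y: act t x = Some y means t.x is defined and equals y. *)
Definition is_partial_action {T Y : Type} (mul : T -> T -> T) (one : T)
  (act : T -> Y -> option Y) : Prop :=
  (forall x, act one x = Some x) /\
  (forall s t x y z, act t x = Some y -> act s y = Some z -> act (mul s t) x = Some z).

Definition is_strong {T Y : Type} (mul : T -> T -> T) (act : T -> Y -> option Y) : Prop :=
  forall s t x y w, act t x = Some y -> act (mul s t) x = Some w ->
    exists z, act s y = Some z.

Definition is_order_preserving_partial {T Y : Type} (le : Y -> Y -> Prop)
  (act : T -> Y -> option Y) : Prop :=
  forall t x y y', le x y -> act t y = Some y' ->
    exists x', act t x = Some x' /\ le x' y'.

Definition is_action {T X : Type} (mul : T -> T -> T) (one : T) (act : T -> X -> X) : Prop :=
  (forall x, act one x = x) /\ (forall s t x, act (mul s t) x = act s (act t x)).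

Definition is_order_preserving_action {T X : Type} (le : X -> X -> Prop)
  (act : T -> X -> X) : Prop :=
  forall t x y, le x y -> le (act t x) (act t y).

Definition is_globalisation {T Y X : Type} (mul : T -> T -> T) (one : T)
  (act : T -> Y -> option Y) (iota : Y -> X) (gact : T -> X -> X) : Prop :=
  (forall a b, iota a = iota b -> a = b) /\
  is_action mul one gact /\
  (forall t x, (exists y, act t x = Some y) <-> (exists z, gact t (iota x) = iota z)) /\
  (forall t x y, act t x = Some y -> gact t (iota x) = iota y).

(* The globalisation is built from order ideals.  On T x Y take the preorder
   generated by (u, w) <= (u, x) for w <= x, and (u t, x) ~ (u, y) whenever
   t.x = y; a pair (t, x) stands for the formal element "t.x".  The order
   ideals of this preorder, under intersection, form a semilattice with
   identity, on which T acts by t.A = ideal generated by {(t u, x) | (u, x) in A},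
   and y is sent to the principal ideal of (1, y).  Strongness and order
   preservation show that the principal ideal of (1, a) consists exactly of
   the pairs (s, w) with s.w defined and below a; this recovers the partial
   action and gives injectivity and the meet-preservation of the embedding. *)

From Stdlib Require Import Relations ProofIrrelevance FunctionalExtensionality
  PropExtensionality.

Section Semilattice.

Variables (Y : Type) (m : Y -> Y -> Y).
Hypothesis hY : is_semilattice m.

Lemma sl_le_refl a : sl_le m a a.
Proof. apply hY. Qed.

Lemma sl_le_trans a b c : sl_le m a b -> sl_le m b c -> sl_le m a c.
Proof.
  destruct hY as [mA _]; unfold sl_le; intros Hab Hbc.
  rewrite <- Hab, <- mA, Hbc; reflexivity.
Qed.

Lemma sl_le_meet a b c : sl_le m c (m a b) <-> sl_le m c a /\ sl_le m c b.
Proof.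
  destruct hY as [mA [mC mI]]; unfold sl_le; split.
  - intros Hc; rewrite <- Hc; split.
    + rewrite <- mA, (mC a b), <- mA, mI; reflexivity.
    + rewrite <- mA, <- mA, mI; reflexivity.
  - intros [Ha Hb]; rewrite mA, Ha, Hb; reflexivity.
Qed.

End Semilattice.

Section Ideals.

Variables (P : Type) (R : relation P).
Hypotheses (R_refl : reflexive P R) (R_trans : transitive P R).

Definition is_ideal (A : P -> Prop) : Prop := forall p q, R q p -> A p -> A q.

Definition ideal : Type := {A : P -> Prop | is_ideal A}.

Lemma ideal_ext (A B : ideal) : (forall p, proj1_sig A p <-> proj1_sig B p) -> A = B.
Proof.
  destruct A as [A HA], B as [B HB]; simpl; intros HAB.
  assert (A = B) as <-.
  { extensionality p; apply propositional_extensionality, HAB. }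
  f_equal; apply proof_irrelevance.
Qed.

Definition ideal_meet (A B : ideal) : ideal :=
  exist is_ideal (fun p => proj1_sig A p /\ proj1_sig B p)
    (fun p q Hqp HAB => conj (proj2_sig A p q Hqp (proj1 HAB))
                             (proj2_sig B p q Hqp (proj2 HAB))).

Definition ideal_top : ideal := exist is_ideal (fun _ => True) (fun _ _ _ _ => I).

Lemma ideal_semilattice : is_semilattice_with_identity ideal_meet ideal_top.
Proof.
  repeat split; intros; apply ideal_ext; simpl; tauto.
Qed.

Lemma ideal_leP (A B : ideal) :
  sl_le ideal_meet A B <-> forall p, proj1_sig A p -> proj1_sig B p.
Proof.
  unfold sl_le; split.
  - intros <- p; simpl; tauto.
  - intros HAB; apply ideal_ext; simpl; firstorder.
Qed.

Definition ideal_down (p : P) : ideal :=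
  exist is_ideal (fun q => R q p) (fun r q Hqr Hrp => R_trans q r p Hqr Hrp).

Lemma ideal_down_inj p q : ideal_down p = ideal_down q -> R p q.
Proof.
  intros Hpq; change (proj1_sig (ideal_down q) p); rewrite <- Hpq; apply R_refl.
Qed.

Definition monotone (f : P -> P) : Prop := forall p q, R q p -> R (f q) (f p).

Definition ideal_image (f : P -> P) (A : ideal) : ideal :=
  exist is_ideal (fun q => exists r, proj1_sig A r /\ R q (f r))
    (fun p q Hqp '(ex_intro _ r (conj Ar Hpr)) =>
       ex_intro _ r (conj Ar (R_trans q p (f r) Hqp Hpr))).

Lemma ideal_image_id f A : (forall p, f p = p) -> ideal_image f A = A.
Proof.
  intros Hf; apply ideal_ext; simpl; intros q; split.
  - intros [r [Ar Hqr]]; rewrite Hf in Hqr; exact (proj2_sig A r q Hqr Ar).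
  - intros Aq; exists q; rewrite Hf; auto.
Qed.

Lemma ideal_image_comp f g h A :
  monotone f -> (forall p, h p = f (g p)) ->
  ideal_image h A = ideal_image f (ideal_image g A).
Proof.
  intros Hf Hh; apply ideal_ext; simpl; intros q; split.
  - intros [r [Ar Hqr]]; exists (g r); split; [exists r; auto | now rewrite <- Hh].
  - intros [r [[s [As Hrs]] Hqr]]; exists s; split; auto.
    rewrite Hh; eapply R_trans; eauto.
Qed.

Lemma ideal_image_down f p : monotone f -> ideal_image f (ideal_down p) = ideal_down (f p).
Proof.
  intros Hf; apply ideal_ext; simpl; intros q; split.
  - intros [r [Hrp Hqr]]; eauto.
  - intros Hq; exists p; auto.
Qed.

Lemma ideal_image_mono f A B :
  sl_le ideal_meet A B -> sl_le ideal_meet (ideal_image f A) (ideal_image f B).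
Proof.
  rewrite !ideal_leP; simpl; intros HAB q [r [Ar Hqr]]; eauto.
Qed.

End Ideals.

Arguments is_ideal {P} R A.
Arguments ideal {P} R.
Arguments ideal_meet {P} R A B.
Arguments ideal_top {P R}.
Arguments ideal_down {P R} R_trans p.
Arguments monotone {P} R f.
Arguments ideal_image {P R} R_trans f A.

Section Globalisation.

Variables (T : Type) (mul : T -> T -> T) (one : T).
Variables (Y : Type) (mY : Y -> Y -> Y) (act : T -> Y -> option Y).
Hypotheses (hT : is_monoid mul one) (hY : is_semilattice mY)
  (hpa : is_partial_action mul one act) (hstrong : is_strong mul act)
  (hop : is_order_preserving_partial (sl_le mY) act).

Inductive step : relation (T * Y) :=
| step_le u w x : sl_le mY w x -> step (u, w) (u, x)
| step_act_l u t x y : act t x = Some y -> step (mul u t, x) (u, y)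
| step_act_r u t x y : act t x = Some y -> step (u, y) (mul u t, x).

Definition below : relation (T * Y) := clos_refl_trans _ step.

Lemma below_refl : reflexive _ below.
Proof. intro; apply rt_refl. Qed.

Lemma below_trans : transitive _ below.
Proof. intros p q r; apply rt_trans. Qed.

Definition mull (t : T) (p : T * Y) : T * Y := (mul t (fst p), snd p).

Lemma mull_monotone t : monotone below (mull t).
Proof.
  destruct hT as [mA _].
  intros p q Hqp; induction Hqp as [q p Hstep | | ]; unfold mull in *.
  - apply rt_step; destruct Hstep; simpl; rewrite ?mA; constructor; auto.
  - apply rt_refl.
  - eapply rt_trans; eauto.
Qed.

Lemma below_act t x y : act t x = Some y -> below (t, x) (one, y) /\ below (one, y) (t, x).
Proof.
  destruct hT as [_ [m1l _]]; intros Hy; split; apply rt_step;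
    rewrite <- (m1l t); constructor; auto.
Qed.

Definition acts_below (a : Y) (p : T * Y) : Prop :=
  exists z, act (fst p) (snd p) = Some z /\ sl_le mY z a.

Lemma acts_below_ideal a : is_ideal below (acts_below a).
Proof.
  destruct hpa as [_ act_mul].
  intros p q Hqp; induction Hqp as [q p Hstep | | ]; auto.
  destruct Hstep as [u w x Hwx | u t x y Hy | u t x y Hy];
    unfold acts_below; simpl; intros [z [Hz Hza]].
  - destruct (hop u w x z Hwx Hz) as [z' [Hz' Hzz']].
    exists z'; split; auto; apply (sl_le_trans _ _ hY) with z; auto.
  - exists z; eauto.
  - (* strongness makes u.y defined, and then u.y = (u t).x = z *)
    destruct (hstrong u t x y z Hy Hz) as [z' Hz'].
    pose proof (act_mul _ _ _ _ _ Hy Hz') as Hz''; rewrite Hz in Hz''.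
    injection Hz'' as <-; exists z; auto.
Qed.

Lemma acts_belowP a q : acts_below a q <-> below q (one, a).
Proof.
  destruct hpa as [act_one _]; split.
  - intros [z [Hz Hza]]; destruct q as [s w].
    apply rt_trans with (one, z); [apply (below_act s w z Hz) |].
    apply rt_step; constructor; auto.
  - intros Hq; apply (acts_below_ideal a _ _ Hq).
    exists a; simpl; rewrite act_one; split; [reflexivity | apply (sl_le_refl _ _ hY)].
Qed.

Lemma acts_below_meet a b q :
  acts_below (mY a b) q <-> acts_below a q /\ acts_below b q.
Proof.
  unfold acts_below; split.
  - intros [z [Hz Hzab]]; apply (sl_le_meet _ _ hY) in Hzab as [Hza Hzb]; split; eauto.
  - intros [[z [Hz Hza]] [z' [Hz' Hzb]]]; rewrite Hz in Hz'; injection Hz' as <-.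
    exists z; split; auto; apply (sl_le_meet _ _ hY); auto.
Qed.

Definition kappa (a : Y) : ideal below := ideal_down below_trans (one, a).

Definition gact (t : T) : ideal below -> ideal below := ideal_image below_trans (mull t).

Lemma kappa_inj a b : kappa a = kappa b -> a = b.
Proof.
  destruct hY as [_ [mC _]].
  assert (Hle : forall a b, kappa a = kappa b -> sl_le mY a b).
  { intros a' b' Hab; unfold kappa in Hab; apply ideal_down_inj, acts_belowP in Hab; auto using below_refl.
    destruct Hab as [z [Hz Hzb]]; destruct hpa as [act_one _]; simpl in Hz.
    rewrite act_one in Hz; injection Hz as <-; exact Hzb. }
  intros Hab; pose proof (Hle _ _ Hab) as Hab'; pose proof (Hle _ _ (eq_sym Hab)) as Hba.
  unfold sl_le in *; rewrite <- Hab', mC; exact Hba.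
Qed.

Lemma gact_kappa t x : gact t (kappa x) = ideal_down below_trans (t, x).
Proof.
  destruct hT as [_ [_ m1r]]; unfold gact, kappa.
  rewrite ideal_image_down by (apply below_refl || apply mull_monotone).
  unfold mull; simpl; rewrite m1r; reflexivity.
Qed.

Lemma gact_kappa_act t x y : act t x = Some y -> gact t (kappa x) = kappa y.
Proof.
  intros Hy; destruct (below_act t x y Hy) as [Htx Hy1].
  rewrite gact_kappa; apply ideal_ext; simpl; intros q; split; intros Hq;
    eapply below_trans; eauto.
Qed.

Lemma gact_kappa_defined t x z : gact t (kappa x) = kappa z -> exists y, act t x = Some y.
Proof.
  rewrite gact_kappa; unfold kappa; intros Hz; apply ideal_down_inj, acts_belowP in Hz;
    auto using below_refl.
  destruct Hz as [y [Hy _]]; eauto.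
Qed.

Lemma gact_is_action : is_action mul one gact.
Proof.
  destruct hT as [mA [m1l _]]; split.
  - intros A; apply ideal_image_id; auto using below_refl.
    intros [u w]; unfold mull; simpl; rewrite m1l; reflexivity.
  - intros s t A; apply ideal_image_comp; auto using below_refl, mull_monotone.
    intros [u w]; unfold mull; simpl; rewrite mA; reflexivity.
Qed.

Lemma kappa_globalisation : is_globalisation mul one act kappa gact.
Proof.
  split; [exact kappa_inj | split; [exact gact_is_action | split]].
  - intros t x; split.
    + intros [y Hy]; exists y; apply gact_kappa_act; auto.
    + intros [z Hz]; eapply gact_kappa_defined; eauto.
  - exact gact_kappa_act.
Qed.

Lemma kappa_morphism : is_semilattice_morphism mY (ideal_meet below) kappa.
Proof.
  intros a b; apply ideal_ext; simpl; intros q.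
  rewrite <- !acts_belowP; apply acts_below_meet.
Qed.

Lemma gact_order_preserving : is_order_preserving_action (sl_le (ideal_meet below)) gact.
Proof. intros t A B; apply ideal_image_mono. Qed.

End Globalisation.

Theorem mainTheorem5 (T : Type) (mul : T -> T -> T) (one : T)
  (Y : Type) (mY : Y -> Y -> Y) (act : T -> Y -> option Y)
  (hT : is_monoid mul one) (hY : is_semilattice mY)
  (hpa : is_partial_action mul one act) (hstrong : is_strong mul act)
  (hop : is_order_preserving_partial (sl_le mY) act) :
  exists (X : Type) (mX : X -> X -> X) (uX : X) (kappa : Y -> X) (gact : T -> X -> X),
    is_globalisation mul one act kappa gact /\
    is_semilattice_with_identity mX uX /\
    is_semilattice_morphism mY mX kappa /\
    is_order_preserving_action (sl_le mX) gact.
Proof.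
  exists (ideal (below T mul Y mY act)), (ideal_meet _), ideal_top,
    (kappa T mul one Y mY act), (gact T mul Y mY act).
  split; [| split; [| split]].
  - apply kappa_globalisation; auto.
  - apply ideal_semilattice.
  - apply kappa_morphism; auto.
  - apply gact_order_preserving.
Qed.
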